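(* Let $\Bbbk$ be a field of characteristic $0$ and let $J$ be a Jordan dialgebra over $\Bbbk$ generated by one element. Then $J$ is special, i.e. $J$ is isomorphic to a subdialgebra of $D^{(+)}$ for some associative dialgebra $D$.
   Context: A 0-dialgebra is a vector space with bilinear operations $\vdash,\dashv$ satisfying $(x\dashv y)\vdash z=(x\vdash y)\vdash z$ and $x\dashv(y\vdash z)=x\dashv(y\dashv z)$. For a nonassociative multilinear polynomial $f(x_1,\dots,x_n)$ and an index $i$, $f(x_1,\dots,\dot x_i,\dots,x_n)$ denotes the dialgebra polynomial obtained by replacing each product $uv$ in each monomial by $u\dashv v$ if $x_i$ occurs in $u$ and by $u\vdash v$ otherwise (i.e. all operation signs point to $x_i$). A Jordan dialgebra is a 0-dialgebra satisfying $x_1\vdash x_2=x_2\dashv x_1$ and $J(x_1,\dots,\dot x_i,\dots,x_4)=0$ for $i=1,2,3,4$, where $J(x_1,x_2,x_3,x_4)=x_1(x_2(x_3x_4))+(x_2(x_1x_3))x_4+x_3(x_2(x_1x_4))-(x_1x_2)(x_3x_4)-(x_1x_3)(x_2x_4)-(x_3x_2)(x_1x_4)$. An associative dialgebra is a dialgebra satisfying the two 0-identities and $(x\vdash y)\vdash z=x\vdash(y\vdash z)$, $(x\dashv y)\dashv z=x\dashv(y\dashv z)$, $(x\vdash y)\dashv z=x\vdash(y\dashv z)$; for such $D$, $D^{(+)}$ is $D$ with $a\vdash_+b=\tfrac12(a\vdash b+b\dashv a)$, $a\dashv_+b=\tfrac12(a\dashv b+b\vdash a)$. *)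

From HB Require Import structures.
From mathcomp Require Import all_boot all_order all_algebra.
Set Implicit Arguments. Unset Strict Implicit. Unset Printing Implicit Defensive.
Import GRing.Theory.
Local Open Scope ring_scope.

Inductive namon : Type := NVar (k : nat) | NMul (u v : namon).

Fixpoint occurs (i : nat) (t : namon) : bool :=
  match t with
  | NVar k => k == i
  | NMul u v => occurs i u || occurs i v
  end.

(* f(x_1,...,\dot x_i,...,x_n): each product uv becomes u -| v if x_i occurs
   in u and u |- v otherwise.  [vd] is |- and [dv] is -| . *)
Fixpoint ev_dot (T : Type) (vd dv : T -> T -> T) (i : nat) (x : nat -> T)
    (t : namon) : T :=
  match t with
  | NVar k => x k
  | NMul u v =>
      if occurs i u then dv (ev_dot vd dv i x u) (ev_dot vd dv i x v)
      else vd (ev_dot vd dv i x u) (ev_dot vd dv i x v)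
  end.

Declare Scope namon_scope.
Notation "u ** v" := (NMul u v) (at level 40, left associativity) : namon_scope.
Delimit Scope namon_scope with namon.

Definition J_pos : seq namon :=
  [:: (NVar 1 ** (NVar 2 ** (NVar 3 ** NVar 4)))%namon;
      ((NVar 2 ** (NVar 1 ** NVar 3)) ** NVar 4)%namon;
      (NVar 3 ** (NVar 2 ** (NVar 1 ** NVar 4)))%namon].
Definition J_neg : seq namon :=
  [:: ((NVar 1 ** NVar 2) ** (NVar 3 ** NVar 4))%namon;
      ((NVar 1 ** NVar 3) ** (NVar 2 ** NVar 4))%namon;
      ((NVar 3 ** NVar 2) ** (NVar 1 ** NVar 4))%namon].

Definition J_dot (K : fieldType) (V : lmodType K) (vd dv : V -> V -> V)
    (i : nat) (x : nat -> V) : V :=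
  \sum_(t <- J_pos) ev_dot vd dv i x t - \sum_(t <- J_neg) ev_dot vd dv i x t.

Definition bilinear_op (K : fieldType) (V : lmodType K) (op : V -> V -> V) :=
  (forall (a : K) (x y z : V), op (a *: x + y) z = a *: op x z + op y z) /\
  (forall (a : K) (x y z : V), op x (a *: y + z) = a *: op x y + op x z).

Definition zero_dialgebra (K : fieldType) (V : lmodType K) (vd dv : V -> V -> V) :=
  [/\ bilinear_op vd, bilinear_op dv,
      (forall x y z, vd (dv x y) z = vd (vd x y) z) &
      (forall x y z, dv x (vd y z) = dv x (dv y z))].

Definition jordan_dialgebra (K : fieldType) (V : lmodType K) (vd dv : V -> V -> V) :=
  [/\ zero_dialgebra vd dv,
      (forall x y, vd x y = dv y x) &
      (forall (i : nat), (1 <= i <= 4)%N -> forall x : nat -> V, J_dot vd dv i x = 0)].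

Definition assoc_dialgebra (K : fieldType) (V : lmodType K) (vd dv : V -> V -> V) :=
  [/\ zero_dialgebra vd dv,
      (forall x y z, vd (vd x y) z = vd x (vd y z)),
      (forall x y z, dv (dv x y) z = dv x (dv y z)) &
      (forall x y z, dv (vd x y) z = vd x (dv y z))].

Definition vd_plus (K : fieldType) (V : lmodType K) (vd dv : V -> V -> V) (a b : V) : V :=
  2%:R^-1 *: (vd a b + dv b a).
Definition dv_plus (K : fieldType) (V : lmodType K) (vd dv : V -> V -> V) (a b : V) : V :=
  2%:R^-1 *: (dv a b + vd b a).

Definition generated_by (K : fieldType) (V : lmodType K) (vd dv : V -> V -> V) (g : V) :=
  forall S : V -> Prop,
    S 0 ->
    (forall (c : K) x y, S x -> S y -> S (c *: x + y)) ->
    (forall x y, S x -> S y -> S (vd x y)) ->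
    (forall x y, S x -> S y -> S (dv x y)) ->
    S g -> forall v, S v.

Definition special_dialgebra (K : fieldType) (V : lmodType K) (vd dv : V -> V -> V) :=
  exists (D : lmodType K) (vdD dvD : D -> D -> D) (phi : V -> D),
    [/\ assoc_dialgebra vdD dvD,
        (forall (c : K) x y, phi (c *: x + y) = c *: phi x + phi y),
        injective phi,
        (forall x y, phi (vd x y) = vd_plus vdD dvD (phi x) (phi y)) &
        (forall x y, phi (dv x y) = dv_plus vdD dvD (phi x) (phi y))].

From HB Require Import structures.
From mathcomp Require Import all_boot all_order all_algebra.
From mathcomp Require Import ring.
From Stdlib Require Import ClassicalEpsilon.
Import GRing.Theory.
Set Implicit Arguments. Unset Strict Implicit. Unset Printing Implicit Defensive.
Local Open Scope ring_scope.

(* Let g generate J, and let L := g |- _ and L' := (g |- g) |- _.  The Jordan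
   identities show that L and L' commute, so J is a K[X,Y]-module with X, Y
   acting as L, L', and every element of J is p.g for some p.  They also show
   that left multiplication by p.g is Psi(p(t,t^2) t) evaluated at (L, L'),
   where Psi F is the rational part of F(X + sqrt D), D := Y - X^2.  Hence J
   embeds, via x |-> (x, 0), into the space N of pairs (a, b) with b in D.J,
   on which X + sqrt D and X - sqrt D act as commuting operators U and V.
   Letting n |- m be (F_n(U)) m and m -| n be (F_n(V)) m, where F_n is the
   polynomial p(t,t^2) t attached to the first coordinate p.g of n, makes N an
   associative dialgebra.  As F(U) + F(V) sends (x, 0) to (2 Psi(F) x, 0),
   the embedding is a homomorphism into N^(+).  Well-definedness of F_n
   follows again from the formula for left multiplication, and
   characteristic 0 is used to divide by 2 and 3. *)

Lemma additive0 (V W : zmodType) (f : V -> W) : {morph f : x y / x + y} -> f 0 = 0.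
Proof. by move=> fD; apply: (addrI (f 0)); rewrite -fD !addr0. Qed.

Record linear_endo (R : comNzRingType) (W : zmodType) (rho : R -> W -> W)
    (U : W -> W) : Prop := LinearEndo {
  rhoDl : forall a b x, rho (a + b) x = rho a x + rho b x;
  rhoDr : forall a x y, rho a (x + y) = rho a x + rho a y;
  rhoM : forall a b x, rho (a * b) x = rho a (rho b x);
  rho1 : forall x, rho 1 x = x;
  endoD : forall x y, U (x + y) = U x + U y;
  endo_rho : forall a x, U (rho a x) = rho a (U x) }.

Section PolyAction.
Variables (R : comNzRingType) (W : zmodType) (rho : R -> W -> W) (U : W -> W).
Hypothesis hA : linear_endo rho U.

Definition poly_act (F : {poly R}) (x : W) : W :=
  \sum_(k < size F) iter k U (rho F`_k x).

Let U0 : U 0 = 0. Proof. exact: additive0 (endoD hA). Qed.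
Let rho0 x : rho 0 x = 0.
Proof. exact: (@additive0 _ _ (rho^~ x) (fun a b => rhoDl hA a b x)). Qed.
Let rhor0 a : rho a 0 = 0. Proof. exact: additive0 (rhoDr hA a). Qed.

Let iterUD k x y : iter k U (x + y) = iter k U x + iter k U y.
Proof. by elim: k => //= k ->; rewrite (endoD hA). Qed.

Let iterU0 k : iter k U 0 = 0. Proof. exact: additive0 (iterUD k). Qed.

Let iterU_rho k a x : iter k U (rho a x) = rho a (iter k U x).
Proof. by elim: k => //= k ->; rewrite (endo_rho hA). Qed.

Lemma poly_act_widen (F : {poly R}) m x : (size F <= m)%N ->
  poly_act F x = \sum_(k < m) iter k U (rho F`_k x).
Proof.
move=> hm; rewrite /poly_act (big_ord_widen m (fun k => iter k U (rho F`_k x)) hm).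
rewrite big_mkcond; apply: eq_bigr => i _; case: ifP => // /negbT.
by rewrite -leqNgt => hi; rewrite nth_default // rho0 iterU0.
Qed.

Lemma poly_actD (F G : {poly R}) x : poly_act (F + G) x = poly_act F x + poly_act G x.
Proof.
pose m := maxn (size F) (size G).
rewrite (@poly_act_widen F m) ?leq_maxl // (@poly_act_widen G m) ?leq_maxr //.
rewrite (@poly_act_widen _ m) ?(leq_trans (size_polyD _ _)) //.
by rewrite -big_split; apply: eq_bigr => i _; rewrite coefD (rhoDl hA) iterUD.
Qed.

Lemma poly_act0 x : poly_act 0 x = 0.
Proof. by rewrite /poly_act size_poly0 big_ord0. Qed.

Lemma poly_actN (F : {poly R}) x : poly_act (- F) x = - poly_act F x.
Proof. by apply: (addrI (poly_act F x)); rewrite -poly_actD !subrr poly_act0. Qed.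

Lemma poly_actB (F G : {poly R}) x : poly_act (F - G) x = poly_act F x - poly_act G x.
Proof. by rewrite poly_actD poly_actN. Qed.

Lemma poly_actDr (F : {poly R}) x y : poly_act F (x + y) = poly_act F x + poly_act F y.
Proof. by rewrite /poly_act -big_split; apply: eq_bigr => i _; rewrite (rhoDr hA) iterUD. Qed.

Lemma poly_act0r (F : {poly R}) : poly_act F 0 = 0.
Proof. exact: additive0 (poly_actDr F). Qed.

Lemma poly_actC c x : poly_act c%:P x = rho c x.
Proof. by rewrite (@poly_act_widen _ 1) ?size_polyC ?leq_b1 // big_ord1 coefC. Qed.

Lemma poly_act1 x : poly_act 1 x = x.
Proof. by rewrite -[1]/(1%:P) poly_actC (rho1 hA). Qed.

Lemma poly_actMX (F : {poly R}) x : poly_act (F * 'X) x = U (poly_act F x).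
Proof.
rewrite (@poly_act_widen _ (size F).+1); last first.
  by apply: (leq_trans (size_polyMleq _ _)); rewrite size_polyX addn2.
rewrite big_ord_recl coefMX eqxx rho0 /= add0r /poly_act (big_morph U (endoD hA) U0).
by apply: eq_bigr => i _; rewrite coefMX /= add0n.
Qed.

Lemma poly_actX x : poly_act 'X x = U x.
Proof. by rewrite -['X]mul1r poly_actMX poly_act1. Qed.

Lemma poly_actCM c (F : {poly R}) x : poly_act (c%:P * F) x = rho c (poly_act F x).
Proof.
rewrite (@poly_act_widen _ (size F)); last by rewrite mul_polyC size_scale_leq.
rewrite /poly_act (big_morph (rho c) (rhoDr hA c) (rhor0 c)).
by apply: eq_bigr => i _; rewrite coefCM (rhoM hA) iterU_rho.
Qed.

Lemma poly_actM (F G : {poly R}) x : poly_act (F * G) x = poly_act F (poly_act G x).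
Proof.
elim/poly_ind: F x => [|F c IH] x; first by rewrite mul0r !poly_act0.
by rewrite mulrDl mulrAC !poly_actD !poly_actMX IH poly_actCM poly_actC.
Qed.

Lemma poly_actAC (F G : {poly R}) x :
  poly_act F (poly_act G x) = poly_act G (poly_act F x).
Proof. by rewrite -!poly_actM mulrC. Qed.

Lemma poly_act_comm (Z : W -> W) : {morph Z : x y / x + y} ->
    (forall x, Z (U x) = U (Z x)) -> (forall a x, Z (rho a x) = rho a (Z x)) ->
  forall (F : {poly R}) x, Z (poly_act F x) = poly_act F (Z x).
Proof.
move=> ZD ZU Zrho F x; rewrite /poly_act (big_morph Z ZD (additive0 ZD)).
have iterZ k y : Z (iter k U y) = iter k U (Z y).
  by elim: k y => //= k IH y; rewrite ZU IH.
by apply: eq_bigr => i _; rewrite iterZ Zrho.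
Qed.

Lemma poly_actU (F : {poly R}) x : U (poly_act F x) = poly_act F (U x).
Proof. exact: poly_act_comm (endoD hA) (fun=> erefl) (endo_rho hA) F x. Qed.

End PolyAction.

Lemma linear_endo_poly (R : comNzRingType) (W : zmodType) (rho : R -> W -> W)
    (U B : W -> W) :
    linear_endo rho U -> {morph B : x y / x + y} ->
    (forall x, B (U x) = U (B x)) -> (forall a x, B (rho a x) = rho a (B x)) ->
  linear_endo (poly_act rho U) B.
Proof.
move=> hA BD BU Brho; split; [exact: poly_actD | exact: poly_actDr |
  exact: poly_actM | exact: poly_act1 | exact: BD |].
exact: poly_act_comm.
Qed.

Lemma linear_endo_scale (R : comNzRingType) (W : lmodType R) (U : W -> W) :
    (forall c x y, U (c *: x + y) = c *: U x + U y) ->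
  linear_endo (fun c (x : W) => c *: x) U.
Proof.
move=> Ulin; have UD x y : U (x + y) = U x + U y by have := Ulin 1 x y; rewrite !scale1r.
split=> //=; [by move=> *; rewrite scalerDl | by move=> *; rewrite scalerDr |
  by move=> *; rewrite scalerA | exact: scale1r |].
by move=> a x; have := Ulin a x 0; rewrite !addr0 (additive0 UD) addr0.
Qed.

Section Bilinear.
Variables (K : fieldType) (V : lmodType K) (op : V -> V -> V).
Hypothesis hop : bilinear_op op.

Lemma bilin_linl c x y z : op (c *: x + y) z = c *: op x z + op y z.
Proof. exact: hop.1. Qed.

Lemma bilin_linr x c y z : op x (c *: y + z) = c *: op x y + op x z.
Proof. exact: hop.2. Qed.

Lemma bilinDl x y z : op (x + y) z = op x z + op y z.
Proof. by have := bilin_linl 1 x y z; rewrite !scale1r. Qed.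

Lemma bilinDr x y z : op x (y + z) = op x y + op x z.
Proof. by have := bilin_linr x 1 y z; rewrite !scale1r. Qed.

Lemma bilin0l z : op 0 z = 0.
Proof. exact: (@additive0 _ _ (op^~ z) (fun x y => bilinDl x y z)). Qed.

Lemma bilin0r x : op x 0 = 0.
Proof. exact: additive0 (bilinDr x). Qed.

Lemma bilinZr c x z : op x (c *: z) = c *: op x z.
Proof. by have := bilin_linr x c z 0; rewrite !addr0 bilin0r addr0. Qed.

Lemma bilinNr x z : op x (- z) = - op x z.
Proof. by rewrite -scaleN1r bilinZr scaleN1r. Qed.

End Bilinear.

Section SqrtDiscriminant.
Variable R : comNzRingType.
Local Notation P2 := {poly {poly R}}.

Definition Xp : P2 := 'X.
Definition Yp : P2 := ('X)%:P.
(* Locked, so that rewrite rules for sums never match inside D. *)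
Fact Dp_key : unit. Proof. exact: tt. Qed.
Definition Dp : P2 := locked_with Dp_key (Yp - Xp ^+ 2).
Lemma DpE : Dp = Yp - Xp ^+ 2. Proof. exact: unlock. Qed.

(* p |-> p(t, t^2), with X the outer and Y the inner variable of [P2]. *)
Definition sq_subst (p : P2) : {poly R} := (map_poly (comp_poly 'X^2) p).['X].

Lemma sq_substD p q : sq_subst (p + q) = sq_subst p + sq_subst q.
Proof. by rewrite /sq_subst rmorphD hornerD. Qed.

Lemma sq_substB p q : sq_subst (p - q) = sq_subst p - sq_subst q.
Proof. by rewrite /sq_subst rmorphB hornerD hornerN. Qed.

Lemma sq_substM p q : sq_subst (p * q) = sq_subst p * sq_subst q.
Proof. by rewrite /sq_subst rmorphM hornerM. Qed.

Lemma sq_substX : sq_subst Xp = 'X.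
Proof. by rewrite /sq_subst map_polyX hornerX. Qed.

Lemma sq_substY : sq_subst Yp = 'X ^+ 2.
Proof. by rewrite /sq_subst /Yp map_polyC hornerC /= comp_polyX. Qed.

Lemma sq_substC c : sq_subst c%:P%:P = c%:P.
Proof. by rewrite /sq_subst map_polyC hornerC /= comp_polyC. Qed.

Lemma sq_subst1 : sq_subst 1 = 1.
Proof. by have := sq_substC 1; rewrite !polyC1. Qed.

Lemma sq_subst_Dp : sq_subst Dp = 0.
Proof. by rewrite DpE sq_substB sq_substY expr2 sq_substM sq_substX -expr2 subrr. Qed.

(* [Mstep] is multiplication by X + sqrt D in the basis (1, sqrt D), so that
   F(X + sqrt D) = Psi F + Chi F sqrt D. *)
Definition scale2 (c : R) (u : P2 * P2) : P2 * P2 := (c%:P%:P * u.1, c%:P%:P * u.2).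
Definition Mstep (u : P2 * P2) : P2 * P2 := (Xp * u.1 + Dp * u.2, u.1 + Xp * u.2).

Let Mstep_endo : linear_endo scale2 Mstep.
Proof.
split.
- by move=> a b [u1 u2]; rewrite /scale2 !polyCD; apply: injective_projections => /=; ring.
- by move=> a [u1 u2] [v1 v2]; apply: injective_projections => /=; ring.
- by move=> a b [u1 u2]; rewrite /scale2 /= !polyCM !mulrA.
- by move=> [u1 u2]; rewrite /scale2 /= !mul1r.
- by move=> [u1 u2] [v1 v2]; apply: injective_projections => /=; ring.
- by move=> a [u1 u2]; apply: injective_projections => /=; ring.
Qed.

Local Notation Mact := (poly_act scale2 Mstep).

Definition Psi (F : {poly R}) : P2 := (Mact F (1, 0)).1.
Definition Chi (F : {poly R}) : P2 := (Mact F (1, 0)).2.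

Lemma PsiD F G : Psi (F + G) = Psi F + Psi G.
Proof. by rewrite /Psi (poly_actD Mstep_endo). Qed.

Lemma ChiD F G : Chi (F + G) = Chi F + Chi G.
Proof. by rewrite /Chi (poly_actD Mstep_endo). Qed.

Lemma Psi0 : Psi 0 = 0. Proof. by rewrite /Psi poly_act0. Qed.
Lemma Chi0 : Chi 0 = 0. Proof. by rewrite /Chi poly_act0. Qed.

Lemma PsiC c : Psi c%:P = c%:P%:P.
Proof. by rewrite /Psi (poly_actC Mstep_endo) /= mulr1. Qed.

Lemma ChiC c : Chi c%:P = 0.
Proof. by rewrite /Chi (poly_actC Mstep_endo) /= mulr0. Qed.

Lemma Psi1 : Psi 1 = 1. Proof. by have := PsiC 1; rewrite !polyC1. Qed.
Lemma Chi1 : Chi 1 = 0. Proof. by have := ChiC 1; rewrite polyC1. Qed.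

Lemma PsiMX F : Psi (F * 'X) = Xp * Psi F + Dp * Chi F.
Proof. by rewrite /Psi (poly_actMX Mstep_endo). Qed.

Lemma ChiMX F : Chi (F * 'X) = Psi F + Xp * Chi F.
Proof. by rewrite /Chi (poly_actMX Mstep_endo). Qed.

Lemma PsiCM c F : Psi (c%:P * F) = c%:P%:P * Psi F.
Proof. by rewrite /Psi (poly_actCM Mstep_endo). Qed.

Lemma sq_subst_Psi F : sq_subst (Psi F) = F.
Proof.
elim/poly_ind: F => [|F c IH]; first by rewrite Psi0 /sq_subst rmorph0 horner0.
rewrite PsiD PsiMX PsiC !sq_substD !sq_substM sq_subst_Dp sq_substX sq_substC IH.
by rewrite mul0r addr0 mulrC.
Qed.

Lemma Psi_rec F : Psi (F * 'X * 'X) =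
  (Xp * Psi (F * 'X)) *+ 2 + Yp * Psi F - (Xp * (Xp * Psi F)) *+ 2.
Proof.
rewrite PsiMX ChiMX PsiMX.
have -> : Yp = Dp + Xp ^+ 2 by rewrite DpE subrK.
ring.
Qed.

End SqrtDiscriminant.

Arguments Xp {R}.
Arguments Yp {R}.
Arguments Dp {R}.

Section OneGenerated.
Variables (K : fieldType) (V : lmodType K) (vd dv : V -> V -> V).
Hypothesis char0 : [pchar K] =i pred0.
Hypothesis hJ : jordan_dialgebra vd dv.
Variable g : V.
Hypothesis gen_g : generated_by vd dv g.

Let zero_di : zero_dialgebra vd dv. Proof. by case: hJ. Qed.
Let hvd : bilinear_op vd. Proof. by case: zero_di. Qed.

Let natf_neq0 n : (n.+1%:R : K) != 0.
Proof. by move/pcharf0P: char0 => ->. Qed.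

Lemma dvE x y : dv x y = vd y x.
Proof. by case: hJ => _ -> _. Qed.

Lemma vd_swapl x y z : vd (vd y x) z = vd (vd x y) z.
Proof. by case: zero_di => _ _ vd_dv _; rewrite -vd_dv dvE. Qed.

Let args4 (a b c d : V) (k : nat) : V :=
  if k == 1%N then a else if k == 2%N then b else if k == 3%N then c else d.

Lemma jordan_dot4 a b c d :
  vd a (vd b (vd c d)) + vd (vd b (vd a c)) d + vd c (vd b (vd a d)) =
  vd (vd a b) (vd c d) + vd (vd a c) (vd b d) + vd (vd c b) (vd a d).
Proof.
case: hJ => _ _ /(_ 4%N isT (args4 a b c d)).
rewrite /J_dot /J_pos /J_neg !big_cons !big_nil /= !addr0 => /eqP.
by rewrite subr_eq0 !addrA => /eqP.
Qed.

Lemma jordan_dot2 a b c d :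
  vd a (vd (vd c d) b) + vd d (vd (vd a c) b) + vd c (vd (vd a d) b) =
  vd (vd c d) (vd a b) + vd (vd a c) (vd d b) + vd (vd a d) (vd c b).
Proof.
case: hJ => _ _ /(_ 2%N isT (args4 a b c d)).
rewrite /J_dot /J_pos /J_neg !big_cons !big_nil /= !addr0 !dvE => /eqP.
by rewrite subr_eq0 !addrA => /eqP.
Qed.

Definition Lg := vd g.
Definition Lgg := vd (vd g g).

Lemma Lg_lin c x y : Lg (c *: x + y) = c *: Lg x + Lg y. Proof. exact: bilin_linr. Qed.
Lemma LgD x y : Lg (x + y) = Lg x + Lg y. Proof. exact: bilinDr. Qed.
Lemma LgN x : Lg (- x) = - Lg x. Proof. exact: bilinNr. Qed.
Lemma LgZ c x : Lg (c *: x) = c *: Lg x. Proof. exact: bilinZr. Qed.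
Lemma Lg0 : Lg 0 = 0. Proof. exact: bilin0r. Qed.

Lemma Lg_Lgg x : Lg (Lgg x) = Lgg (Lg x).
Proof.
have := jordan_dot2 g x g g; rewrite -/Lg -/Lgg => h.
apply: (scalerI (natf_neq0 2)).
by rewrite !scaler_nat !mulrS mulr0n !addr0 !addrA.
Qed.

Lemma vd_LgLg x y : vd (Lg (Lg x)) y =
  Lgg (vd x y) + vd (Lg x) (Lg y) + vd (Lg x) (Lg y) - vd x (Lg (Lg y))
  - Lg (Lg (vd x y)).
Proof.
have := jordan_dot4 g g x y; rewrite [vd (vd x g) _]vd_swapl -/Lg -/Lgg => <-.
by rewrite addrK addrC addKr.
Qed.

Lemma vd_Lgg x y : vd (Lgg x) y =
  vd (Lg x) (Lg y) + Lgg (vd x y) + vd (Lg x) (Lg y) - Lg (vd x (Lg y))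
  - Lg (vd x (Lg y)).
Proof.
have := jordan_dot4 g x g y; rewrite [vd (vd x (vd g g)) _]vd_swapl -/Lg -/Lgg => <-.
by rewrite addrK addrC addKr.
Qed.

Let Lgg_endo : linear_endo (fun c (x : V) => c *: x) Lgg.
Proof. exact/linear_endo_scale/bilin_linr. Qed.

Local Notation act1 := (poly_act (fun c (x : V) => c *: x) Lgg).
Local Notation P2 := {poly {poly K}}.

Let Lg_endo : linear_endo act1 Lg := linear_endo_poly Lgg_endo LgD Lg_Lgg LgZ.

(* [act p] is p(L, L'): the outer variable of [P2] acts as [Lg], the inner one
   as [Lgg]. *)
Local Notation act := (poly_act act1 Lg).

Lemma actC c x : act c%:P%:P x = c *: x.
Proof. by rewrite (poly_actC Lg_endo) (poly_actC Lgg_endo). Qed.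

Lemma actX x : act Xp x = Lg x.
Proof. exact: (poly_actX Lg_endo). Qed.

Lemma actY x : act Yp x = Lgg x.
Proof. by rewrite (poly_actC Lg_endo) (poly_actX Lgg_endo). Qed.

Lemma actXp (q : P2) x : act (Xp * q) x = Lg (act q x).
Proof. by rewrite (poly_actM Lg_endo) actX. Qed.

Lemma actYp (q : P2) x : act (Yp * q) x = Lgg (act q x).
Proof. by rewrite (poly_actM Lg_endo) actY. Qed.

Lemma actCM c (p : P2) x : act (c%:P%:P * p) x = c *: act p x.
Proof. by rewrite (poly_actM Lg_endo) actC. Qed.

Lemma act_linl c (p q : P2) x : act (c%:P%:P * p + q) x = c *: act p x + act q x.
Proof. by rewrite (poly_actD Lg_endo) actCM. Qed.

Lemma actZr (p : P2) c x : act p (c *: x) = c *: act p x.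
Proof. by rewrite -!actC (poly_actAC Lg_endo). Qed.

Lemma act_linr (p : P2) c x y : act p (c *: x + y) = c *: act p x + act p y.
Proof. by rewrite (poly_actDr Lg_endo) actZr. Qed.

Lemma actBr (p : P2) x y : act p (x - y) = act p x - act p y.
Proof. by rewrite (poly_actDr Lg_endo) -scaleN1r actZr scaleN1r. Qed.

Lemma Lg_act (q : P2) x : Lg (act q x) = act q (Lg x).
Proof. exact: (poly_actU Lg_endo). Qed.

Lemma act_Psi_rec (p0 p1 : P2) y :
  act ((Xp * p1) *+ 2 + Yp * p0 - (Xp * (Xp * p0)) *+ 2) y =
  Lg (act p1 y) + Lg (act p1 y) + Lgg (act p0 y) - Lg (Lg (act p0 y))
  - Lg (Lg (act p0 y)).
Proof.
rewrite (poly_actB Lg_endo) (poly_actD Lg_endo) !mulr2n !(poly_actD Lg_endo).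
by rewrite !actXp actYp opprD addrA.
Qed.

(** * Left multiplication by an element p.g *)

Definition Phi (p : P2) : P2 := Psi (sq_subst p * 'X).
Definition Phi_spec (p : P2) := forall y, vd (act p g) y = act (Phi p) y.

Lemma Phi_spec_XX p : Phi_spec p -> Phi_spec (Xp * p) -> Phi_spec (Xp * (Xp * p)).
Proof.
move=> e0; rewrite /Phi_spec actXp => e1 y; rewrite !actXp vd_LgLg !e0 !e1 /Phi !sq_substM !sq_substX.
have -> : 'X * ('X * sq_subst p) * 'X = sq_subst p * 'X * 'X * 'X by ring.
rewrite Psi_rec act_Psi_rec.
have -> : 'X * sq_subst p * 'X = sq_subst p * 'X * 'X by ring.
by rewrite -!Lg_act; congr (_ - _ - _); rewrite addrC addrCA addrC.
Qed.

Lemma Phi_spec_Y p : Phi_spec p -> Phi_spec (Xp * p) -> Phi_spec (Yp * p).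
Proof.
move=> e0; rewrite /Phi_spec actXp => e1 y; rewrite actYp vd_Lgg !e0 !e1 /Phi !sq_substM sq_substX sq_substY.
have -> : 'X ^+ 2 * sq_subst p * 'X = sq_subst p * 'X * 'X * 'X by ring.
rewrite Psi_rec act_Psi_rec.
have -> : 'X * sq_subst p * 'X = sq_subst p * 'X * 'X by ring.
by rewrite -!Lg_act; congr (_ - _ - _); rewrite addrAC.
Qed.

Lemma Phi_lin c p q : Phi (c%:P%:P * p + q) = c%:P%:P * Phi p + Phi q.
Proof. by rewrite /Phi sq_substD sq_substM sq_substC mulrDl -mulrA PsiD PsiCM. Qed.

Lemma Phi_spec_lin c p q : Phi_spec p -> Phi_spec q -> Phi_spec (c%:P%:P * p + q).
Proof. by move=> e0 e1 y; rewrite act_linl (bilin_linl hvd) e0 e1 Phi_lin act_linl. Qed.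

Lemma Phi_spec1 : Phi_spec 1.
Proof.
move=> y; rewrite (poly_act1 Lg_endo) /Phi sq_subst1 mul1r.
by rewrite -['X]mul1r PsiMX Psi1 Chi1 mulr0 addr0 mulr1 actX.
Qed.

Lemma Phi_specX : Phi_spec Xp.
Proof.
move=> y; rewrite actX /Phi sq_substX.
rewrite PsiMX -[X in Psi X]mul1r -[X in Chi X]mul1r PsiMX ChiMX Psi1 Chi1.
rewrite !mulr0 !addr0 !mulr1.
have -> : Xp * Xp + Dp = Yp :> P2 by rewrite DpE addrC expr2 subrK.
by rewrite actY.
Qed.

Lemma Phi_spec_all p : Phi_spec p.
Proof.
suff [] : Phi_spec p /\ Phi_spec (Xp * p) by [].
pose G p := Phi_spec p /\ Phi_spec (Xp * p).
have GX q : G q -> G (Xp * q) by case=> e0 e1; split => //; apply: Phi_spec_XX.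
have GY q : G q -> G (Yp * q).
  case=> e0 e1; split; first exact: Phi_spec_Y.
  have -> : Xp * (Yp * q) = Yp * (Xp * q) by ring.
  by apply: Phi_spec_Y => //; apply: Phi_spec_XX.
have Glin c q r : G q -> G r -> G (c%:P%:P * q + r).
  case=> e0 e1 [e2 e3]; split; first exact: Phi_spec_lin.
  by rewrite mulrDr mulrCA; apply: Phi_spec_lin.
have G1 : G 1 by split; [exact: Phi_spec1 | rewrite mulr1; exact: Phi_specX].
have G0 : G 0.
  rewrite /G /Phi_spec /Phi mulr0 /sq_subst rmorph0 horner0 mul0r Psi0.
  by split=> y; rewrite poly_act0 (bilin0l hvd) poly_act0.
have Gc c : G c%:P%:P by have := Glin c 1 0 G1 G0; rewrite mulr1 addr0.
have GYpoly (c : {poly K}) : G c%:P.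
  elim/poly_ind: c => [|d k IH]; first by rewrite polyC0.
  have := Glin 1 _ _ (GY _ IH) (Gc k); rewrite polyC1 mul1r.
  by rewrite polyCD polyCM /Yp mulrC.
elim/poly_ind: p => [|q c IH]; first exact: G0.
have := Glin 1 _ _ (GX _ IH) (GYpoly c); rewrite polyC1 mul1r.
by rewrite /Xp mulrC.
Qed.

Lemma vd_act_g p y : vd (act p g) y = act (Phi p) y.
Proof. exact: Phi_spec_all. Qed.

Lemma act_g_onto v : exists p, act p g = v.
Proof.
move: v; apply: (@gen_g (fun w => exists p : P2, act p g = w)).
- by exists 0; rewrite poly_act0.
- by move=> c x y [p <-] [q <-]; exists (c%:P%:P * p + q); rewrite act_linl.
- by move=> x y [p <-] [q <-]; exists (Phi p * q); rewrite vd_act_g (poly_actM Lg_endo).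
- move=> x y [p <-] [q <-]; exists (Phi q * p).
  by rewrite dvE vd_act_g (poly_actM Lg_endo).
- by exists 1; rewrite (poly_act1 Lg_endo).
Qed.

Lemma act_g_ontoP v : exists p, act p g == v.
Proof. by case: (act_g_onto v) => p hp; exists p; apply/eqP. Qed.

Definition rep (v : V) : P2 := xchoose (act_g_ontoP v).

Lemma repP v : act (rep v) g = v.
Proof. exact/eqP/(xchooseP (act_g_ontoP v)). Qed.

(** * The associative dialgebra N *)

(* A pair (a, D c) stands for a + c sqrt D; [UN] and [VN] are multiplication
   by X + sqrt D and X - sqrt D. *)
Local Notation Dop := (act Dp).

Definition inN (n : V * V) : bool :=
  if excluded_middle_informative (exists y, n.2 = Dop y) then true else false.

Lemma inNP n : reflect (exists y, n.2 = Dop y) (inN n).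
Proof. by rewrite /inN; case: excluded_middle_informative => h; constructor. Qed.

Lemma inN_submod_closed : GRing.submod_closed inN.
Proof.
split; first by apply/inNP; exists 0; rewrite (poly_act0r Lg_endo).
move=> c u w /inNP [y1 e1] /inNP [y2 e2]; apply/inNP; exists (c *: y1 + y2).
by rewrite act_linr /= -e1 -e2.
Qed.

HB.instance Definition _ :=
  GRing.isSubmodClosed.Build K (V * V)%type inN inN_submod_closed.
Definition N := {n : V * V | inN n}.
HB.instance Definition _ := [isSub of N for sval].
HB.instance Definition _ := [Choice of N by <:].
HB.instance Definition _ := [SubChoice_isSubLmodule of N by <:].

Lemma valN_lin c (n m : N) : val (c *: n + m) = c *: val n + val m. Proof. by []. Qed.
Lemma valND (n m : N) : val (n + m) = val n + val m. Proof. by []. Qed.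
Lemma valNZ c (n : N) : val (c *: n) = c *: val n. Proof. by []. Qed.

Definition Umap (n : V * V) : V * V := (Lg n.1 + n.2, Dop n.1 + Lg n.2).
Definition Vmap (n : V * V) : V * V := (Lg n.1 - n.2, Lg n.2 - Dop n.1).

Lemma Umap_inN n : inN n -> inN (Umap n).
Proof.
case/inNP=> y ey; apply/inNP; exists (n.1 + Lg y).
by rewrite /Umap /= ey (poly_actDr Lg_endo) Lg_act.
Qed.

Lemma Vmap_inN n : inN n -> inN (Vmap n).
Proof.
case/inNP=> y ey; apply/inNP; exists (Lg y - n.1).
by rewrite /Vmap /= ey actBr Lg_act.
Qed.

Definition UN (n : N) : N := Sub (Umap (val n)) (Umap_inN (valP n)).
Definition VN (n : N) : N := Sub (Vmap (val n)) (Vmap_inN (valP n)).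

Lemma val_UN n : val (UN n) = Umap (val n). Proof. by rewrite SubK. Qed.
Lemma val_VN n : val (VN n) = Vmap (val n). Proof. by rewrite SubK. Qed.

Lemma UN_lin c x y : UN (c *: x + y) = c *: UN x + UN y.
Proof.
apply: val_inj; rewrite !val_UN !valN_lin !val_UN /Umap.
case: (val x) (val y) => [a1 b1] [a2 b2]; apply: injective_projections => /=.
  by rewrite Lg_lin scalerDr addrACA.
by rewrite act_linr Lg_lin scalerDr addrACA.
Qed.

Lemma VN_lin c x y : VN (c *: x + y) = c *: VN x + VN y.
Proof.
apply: val_inj; rewrite !val_VN !valN_lin !val_VN /Vmap.
case: (val x) (val y) => [a1 b1] [a2 b2]; apply: injective_projections => /=.
  by rewrite Lg_lin scalerDr scalerN opprD addrACA.
by rewrite act_linr Lg_lin scalerDr scalerN opprD addrACA.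
Qed.

Lemma UN_VN n : UN (VN n) = VN (UN n).
Proof.
apply: val_inj; rewrite val_UN !val_VN val_UN /Umap /Vmap.
case: (val n) => a b; apply: injective_projections => /=.
  by rewrite !LgD LgN addrA subrK opprD addrA addrAC addrK.
rewrite actBr (poly_actDr Lg_endo) !LgD LgN Lg_act.
by rewrite opprD (AC (2*2) ((1*3)*(4*2))).
Qed.

Let UN_endo : linear_endo (fun c (x : N) => c *: x) UN := linear_endo_scale UN_lin.
Let VN_endo : linear_endo (fun c (x : N) => c *: x) VN := linear_endo_scale VN_lin.
Local Notation actU := (poly_act (fun c (x : N) => c *: x) UN).
Local Notation actV := (poly_act (fun c (x : N) => c *: x) VN).

Lemma val_actU F n : val (actU F n) =
  (act (Psi F) (val n).1 + act (Chi F) (val n).2,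
   act (Psi F) (val n).2 + act (Dp * Chi F) (val n).1).
Proof.
elim/poly_ind: F => [|F c IH]; first by rewrite poly_act0 Psi0 Chi0 mulr0 !poly_act0 addr0.
rewrite (poly_actD UN_endo) (poly_actMX UN_endo) (poly_actC UN_endo).
rewrite valND valNZ val_UN IH /Umap.
rewrite PsiD PsiMX PsiC ChiD ChiMX ChiC addr0.
case: (val n) => a b; apply: injective_projections => /=.
  rewrite !(poly_actD Lg_endo) !actXp actC LgD.
  by rewrite (AC (2*2*1) ((1*4*5)*(3*2))).
have e : Lg (act (Dp * Chi F) a) = act (Dp * (Xp * Chi F)) a.
  by rewrite -actXp mulrCA.
rewrite !(poly_actD Lg_endo) actXp actC (poly_actDr Lg_endo) LgD mulrDr e.
rewrite -!(poly_actM Lg_endo) (poly_actD Lg_endo).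
by rewrite (AC (2*2*1) ((3*2*5)*(1*4))).
Qed.

Lemma val_actV F n : val (actV F n) =
  (act (Psi F) (val n).1 - act (Chi F) (val n).2,
   act (Psi F) (val n).2 - act (Dp * Chi F) (val n).1).
Proof.
elim/poly_ind: F => [|F c IH]; first by rewrite poly_act0 Psi0 Chi0 mulr0 !poly_act0 subr0.
rewrite (poly_actD VN_endo) (poly_actMX VN_endo) (poly_actC VN_endo).
rewrite valND valNZ val_VN IH /Vmap.
rewrite PsiD PsiMX PsiC ChiD ChiMX ChiC addr0.
case: (val n) => a b; apply: injective_projections => /=.
  rewrite !(poly_actD Lg_endo) !actXp actC LgD LgN.
  by rewrite opprB opprD (AC (2*2*1) ((1*3*5)*(4*2))).
have e : Lg (act (Dp * Chi F) a) = act (Dp * (Xp * Chi F)) a.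
  by rewrite -actXp mulrCA.
rewrite !(poly_actD Lg_endo) actXp actC actBr LgD LgN mulrDr e.
rewrite -!(poly_actM Lg_endo) (poly_actD Lg_endo).
by rewrite opprB opprD (AC (2*2*1) ((1*3*5)*(4*2))).
Qed.

(* This makes the products of N independent of the choice of [rep]. *)
Lemma Phi_vanish p : act p g = 0 -> forall z,
  act (Phi p) z = 0 /\ act (Dp * Chi (sq_subst p * 'X)) z = 0.
Proof.
move=> hp z; have e0 w : act (Phi p) w = 0 by rewrite -vd_act_g hp (bilin0l hvd).
split; first exact: e0.
have -> : Dp * Chi (sq_subst p * 'X) = Phi (Xp * p) - Xp * Phi p.
  rewrite /Phi sq_substM sq_substX.
  have -> : 'X * sq_subst p * 'X = sq_subst p * 'X * 'X by ring.
  by rewrite PsiMX addrC addKr.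
rewrite (poly_actB Lg_endo) -vd_act_g actXp hp Lg0 (bilin0l hvd).
by rewrite actXp e0 Lg0 subrr.
Qed.

Lemma actU_vanish p : act p g = 0 -> forall n, actU (sq_subst p * 'X) n = 0.
Proof.
move=> hp n; apply: val_inj; rewrite val_actU; case/inNP: (valP n) => y ->.
rewrite -(poly_actM Lg_endo) [Chi _ * Dp]mulrC.
by rewrite !(proj1 (Phi_vanish hp _)) !(proj2 (Phi_vanish hp _)) !addr0.
Qed.

Lemma actV_vanish p : act p g = 0 -> forall n, actV (sq_subst p * 'X) n = 0.
Proof.
move=> hp n; apply: val_inj; rewrite val_actV; case/inNP: (valP n) => y ->.
rewrite -(poly_actM Lg_endo) [Chi _ * Dp]mulrC.
by rewrite !(proj1 (Phi_vanish hp _)) !(proj2 (Phi_vanish hp _)) !subr0.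
Qed.

Definition polyN (n : N) : {poly K} := sq_subst (rep (val n).1) * 'X.
Definition lmulN (n m : N) : N := actU (polyN n) m.
Definition rmulN (n m : N) : N := actV (polyN n) m.

Lemma lmulNE p n : act p g = (val n).1 -> forall m, lmulN n m = actU (sq_subst p * 'X) m.
Proof.
move=> hp m; have h0 : act (p - rep (val n).1) g = 0.
  by rewrite (poly_actB Lg_endo) repP hp subrr.
apply/eqP; rewrite eq_sym -subr_eq0 -(poly_actB UN_endo) -mulrBl -sq_substB.
by rewrite (actU_vanish h0).
Qed.

Lemma rmulNE p n : act p g = (val n).1 -> forall m, rmulN n m = actV (sq_subst p * 'X) m.
Proof.
move=> hp m; have h0 : act (p - rep (val n).1) g = 0.
  by rewrite (poly_actB Lg_endo) repP hp subrr.
apply/eqP; rewrite eq_sym -subr_eq0 -(poly_actB VN_endo) -mulrBl -sq_substB.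
by rewrite (actV_vanish h0).
Qed.

Lemma lmulN_linl c n n' m : lmulN (c *: n + n') m = c *: lmulN n m + lmulN n' m.
Proof.
rewrite (@lmulNE (c%:P%:P * rep (val n).1 + rep (val n').1)); last first.
  by rewrite act_linl !repP.
by rewrite sq_substD sq_substM sq_substC mulrDl -mulrA (poly_actD UN_endo) (poly_actCM UN_endo).
Qed.

Lemma rmulN_linl c n n' m : rmulN (c *: n + n') m = c *: rmulN n m + rmulN n' m.
Proof.
rewrite (@rmulNE (c%:P%:P * rep (val n).1 + rep (val n').1)); last first.
  by rewrite act_linl !repP.
by rewrite sq_substD sq_substM sq_substC mulrDl -mulrA (poly_actD VN_endo) (poly_actCM VN_endo).
Qed.

Lemma lmulN_linr c n m m' : lmulN n (c *: m + m') = c *: lmulN n m + lmulN n m'.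
Proof. by rewrite /lmulN (poly_actDr UN_endo) -!(poly_actC UN_endo) (poly_actAC UN_endo). Qed.

Lemma rmulN_linr c n m m' : rmulN n (c *: m + m') = c *: rmulN n m + rmulN n m'.
Proof. by rewrite /rmulN (poly_actDr VN_endo) -!(poly_actC VN_endo) (poly_actAC VN_endo). Qed.

Lemma snd_inN (m : N) : exists q, (val m).2 = Dop (act q g).
Proof. by case/inNP: (valP m) => y ->; case: (act_g_onto y) => q <-; exists q. Qed.

Lemma lmulN_lmulN n m z : lmulN (lmulN n m) z = lmulN n (lmulN m z).
Proof.
case: (snd_inN m) => q hq.
rewrite (@lmulNE (Psi (polyN n) * rep (val m).1 + Chi (polyN n) * Dp * q)); last first.
  by rewrite /lmulN val_actU /= (poly_actD Lg_endo) !(poly_actM Lg_endo) repP hq.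
rewrite sq_substD !sq_substM sq_subst_Psi sq_subst_Dp mulr0 mul0r addr0 -mulrA.
exact: (poly_actM UN_endo).
Qed.

Lemma lmulN_rmulN n m z : lmulN (rmulN n m) z = lmulN n (lmulN m z).
Proof.
case: (snd_inN m) => q hq.
rewrite (@lmulNE (Psi (polyN n) * rep (val m).1 - Chi (polyN n) * Dp * q)); last first.
  by rewrite /rmulN val_actV /= (poly_actB Lg_endo) !(poly_actM Lg_endo) repP hq.
rewrite sq_substB !sq_substM sq_subst_Psi sq_subst_Dp mulr0 mul0r subr0 -mulrA.
exact: (poly_actM UN_endo).
Qed.

Lemma rmulN_lmulN n m z : rmulN (lmulN n m) z = rmulN n (rmulN m z).
Proof.
case: (snd_inN m) => q hq.
rewrite (@rmulNE (Psi (polyN n) * rep (val m).1 + Chi (polyN n) * Dp * q)); last first.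
  by rewrite /lmulN val_actU /= (poly_actD Lg_endo) !(poly_actM Lg_endo) repP hq.
rewrite sq_substD !sq_substM sq_subst_Psi sq_subst_Dp mulr0 mul0r addr0 -mulrA.
exact: (poly_actM VN_endo).
Qed.

Lemma rmulN_rmulN n m z : rmulN (rmulN n m) z = rmulN n (rmulN m z).
Proof.
case: (snd_inN m) => q hq.
rewrite (@rmulNE (Psi (polyN n) * rep (val m).1 - Chi (polyN n) * Dp * q)); last first.
  by rewrite /rmulN val_actV /= (poly_actB Lg_endo) !(poly_actM Lg_endo) repP hq.
rewrite sq_substB !sq_substM sq_subst_Psi sq_subst_Dp mulr0 mul0r subr0 -mulrA.
exact: (poly_actM VN_endo).
Qed.

Lemma lmulNC n m z : lmulN n (lmulN m z) = lmulN m (lmulN n z).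
Proof. exact: (poly_actAC UN_endo). Qed.

Lemma rmulNC n m z : rmulN n (rmulN m z) = rmulN m (rmulN n z).
Proof. exact: (poly_actAC VN_endo). Qed.

Lemma lmulN_rmulNC n m z : lmulN n (rmulN m z) = rmulN m (lmulN n z).
Proof.
rewrite /lmulN /rmulN; symmetry; apply: poly_act_comm.
- by move=> x y; rewrite (poly_actDr VN_endo).
- move=> x; symmetry; apply: poly_act_comm => [y y'||c y].
  + by rewrite (endoD UN_endo).
  + exact: UN_VN.
  + by rewrite (endo_rho UN_endo).
- by move=> c x; rewrite -!(poly_actC VN_endo) (poly_actAC VN_endo).
Qed.

Lemma assoc_dialgebra_N : assoc_dialgebra lmulN (fun n m => rmulN m n).
Proof.
split; [split; [split | split | |] | | |] => /=.
- exact: lmulN_linl.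
- exact: lmulN_linr.
- by move=> *; exact: rmulN_linr.
- by move=> *; exact: rmulN_linl.
- by move=> x y z; rewrite lmulN_rmulN lmulN_lmulN lmulNC.
- by move=> x y z; rewrite rmulN_lmulN rmulN_rmulN rmulNC.
- by move=> x y z; rewrite lmulN_lmulN.
- by move=> x y z; rewrite rmulN_rmulN.
- by move=> x y z; rewrite lmulN_rmulNC.
Qed.

Lemma embed_inN x : inN (x, 0).
Proof. by apply/inNP; exists 0; rewrite (poly_act0r Lg_endo). Qed.

Definition embed (x : V) : N := Sub (x, 0) (embed_inN x).

Lemma val_embed x : val (embed x) = (x, 0). Proof. by rewrite SubK. Qed.

Lemma embed_vd x y :
  embed (vd x y) = 2%:R^-1 *: (lmulN (embed x) (embed y) + rmulN (embed x) (embed y)).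
Proof.
apply: val_inj; rewrite valNZ valND /lmulN /rmulN val_actU val_actV /polyN.
rewrite !val_embed /= !(poly_act0r Lg_endo) !addr0 !subr0 add0r sub0r.
rewrite -[Psi _]/(Phi (rep x)) -vd_act_g repP.
apply: injective_projections => /=; last by rewrite subrr scaler0.
by rewrite -mulr2n -scaler_nat scalerA mulVf ?scale1r // (natf_neq0 1).
Qed.

Lemma special_one_generated : special_dialgebra vd dv.
Proof.
exists N, lmulN, (fun n m => rmulN m n), embed; split.
- exact: assoc_dialgebra_N.
- move=> c x y; apply: val_inj; rewrite valN_lin !val_embed.
  by apply: injective_projections => /=; rewrite ?scaler0 ?addr0.
- by move=> x y /(congr1 val); rewrite !val_embed => -[].
- by move=> x y; rewrite embed_vd.
- by move=> x y; rewrite /dv_plus dvE embed_vd addrC.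
Qed.

End OneGenerated.

Theorem mainTheorem3 (K : fieldType) (V : lmodType K) (vd dv : V -> V -> V) :
  [pchar K] =i pred0 ->
  jordan_dialgebra vd dv ->
  (exists g : V, generated_by vd dv g) ->
  special_dialgebra vd dv.
Proof. by move=> char0 hJ [g gen_g]; exact: (@special_one_generated K V vd dv char0 hJ g gen_g). Qed.
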